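(* Let $P$ be a finite poset. Then $P$ is a forest with duplications if and only if every vertex of the graph $\Gamma(P)$ has degree at most one, i.e. $\Gamma(P)$ is a disjoint union of isolated edges and isolated vertices.
   Context: A (lower) order ideal of $P$ is a subset $J$ with $y\in J$, $x\preceq y$ implying $x\in J$; it is a connected order ideal if it is nonempty and its Hasse diagram is connected. Two order ideals $J_1,J_2$ intersect non-trivially if $J_1\cap J_2\neq\emptyset$ and neither of $J_1,J_2$ contains the other. The graph $\Gamma(P)$ has as vertex set the connected order ideals of $P$, with an edge between two of them exactly when they intersect non-trivially. Forests with duplications are the finite posets obtainable from one-element posets by repeated application of the following operations: (i) Disjoint union: for posets $P,Q$, take the disjoint union of the sets and of the relations, giving $P\oplus Q$. (ii) Hanging: for posets $P,Q$ and an element $a\in P$, on the disjoint union of $P$ and $Q$ add the relations $q\prec a$ for every $q\in Q$ and close transitively, giving $P\,^aQ$. (iii) Duplication: given a poset of the form $P=Q_1\,^a\,Q_2$ (obtained by hanging $Q_2$ below $a\in Q_1$) where $a$ is a minimal element of $Q_1$, add a new element $a'$ with relations $q\preceq a'$ for all $q\in Q_2$ and $a'\preceq q$ for all $q\in Q_1$ with $q\succ a$ (closed transitively), giving $P^{(a)}$. *)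

From mathcomp Require Import all_boot.
Set Implicit Arguments. Unset Strict Implicit. Unset Printing Implicit Defensive.

Definition partial_order (T : finType) (r : rel T) : Prop :=
  [/\ reflexive r, antisymmetric r & transitive r].

Definition dunion_rel (T1 T2 : finType) (r1 : rel T1) (r2 : rel T2)
  : rel (T1 + T2)%type :=
  fun x y => match x, y with
             | inl x1, inl y1 => r1 x1 y1
             | inr x2, inr y2 => r2 x2 y2
             | _, _ => false
             end.

Definition hang_base (T1 T2 : finType) (r1 : rel T1) (r2 : rel T2) (a : T1)
  : rel (T1 + T2)%type :=
  fun x y => dunion_rel r1 r2 x y ||
             match x, y with
             | inr _, inl y1 => y1 == a
             | _, _ => false
             end.

Definition hang_rel (T1 T2 : finType) (r1 : rel T1) (r2 : rel T2) (a : T1)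
  : rel (T1 + T2)%type := connect (hang_base r1 r2 a).

(* (iii) duplication of a in Q1 ^a Q2: new element a' (= None) with
   q <= a' for q in Q2 and a' <= q for q in Q1 with q > a,
   closed transitively. *)
Definition dup_base (T1 T2 : finType) (r1 : rel T1) (r2 : rel T2) (a : T1)
  : rel (option (T1 + T2)) :=
  fun x y => match x, y with
             | Some x', Some y' => hang_rel r1 r2 a x' y'
             | Some (inr _), None => true
             | None, Some (inl q) => r1 a q && (q != a)
             | None, None => true
             | _, _ => false
             end.

Definition dup_rel (T1 T2 : finType) (r1 : rel T1) (r2 : rel T2) (a : T1)
  : rel (option (T1 + T2)) := connect (dup_base r1 r2 a).

Definition minimal_in (T : finType) (r : rel T) (a : T) : Prop :=
  forall x, r x a -> x = a.

Inductive fwd : forall T : finType, rel T -> Prop :=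
| fwd_one : fwd (T := unit) (fun _ _ => true)
| fwd_iso (T T' : finType) (r : rel T) (r' : rel T') (f : T -> T') :
    fwd r -> bijective f -> (forall x y, r' (f x) (f y) = r x y) -> fwd r'
| fwd_union (T1 T2 : finType) (r1 : rel T1) (r2 : rel T2) :
    fwd r1 -> fwd r2 -> fwd (dunion_rel r1 r2)
| fwd_hang (T1 T2 : finType) (r1 : rel T1) (r2 : rel T2) (a : T1) :
    fwd r1 -> fwd r2 -> fwd (hang_rel r1 r2 a)
| fwd_dup (T1 T2 : finType) (r1 : rel T1) (r2 : rel T2) (a : T1) :
    fwd r1 -> fwd r2 -> minimal_in r1 a -> fwd (dup_rel r1 r2 a).

Definition order_ideal (T : finType) (r : rel T) (J : {set T}) : bool :=
  [forall x, forall y, (y \in J) && r x y ==> (x \in J)].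

Definition slt (T : finType) (r : rel T) (x y : T) : bool := r x y && (x != y).

Definition cover_in (T : finType) (r : rel T) (J : {set T}) : rel T :=
  fun x y => [&& x \in J, y \in J, slt r x y &
              [forall z, ~~ [&& z \in J, slt r x z & slt r z y]]].

Definition hasse_in (T : finType) (r : rel T) (J : {set T}) : rel T :=
  fun x y => cover_in r J x y || cover_in r J y x.

Definition conn_ideal (T : finType) (r : rel T) (J : {set T}) : bool :=
  [&& order_ideal r J, J != set0 &
      [forall x, forall y, (x \in J) && (y \in J) ==> connect (hasse_in r J) x y]].

Definition intersect_nontriv (T : finType) (J1 J2 : {set T}) : bool :=
  [&& J1 :&: J2 != set0, ~~ (J1 \subset J2) & ~~ (J2 \subset J1)].

Definition gamma_nbrs (T : finType) (r : rel T) (J : {set T}) : {set {set T}} :=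
  [set K | conn_ideal r K && intersect_nontriv J K].

(* Connectedness of an ideal can be tested on its comparability graph instead of
   its Hasse diagram, since a comparable pair is joined by a saturated chain. The
   bound "every vertex of Gamma(P) has at most one neighbour" is transported along
   retractions: when J and its neighbours are determined by their traces along a
   retraction onto a subposet, their preimages are neighbours there.

   Each construction preserves the bound. A connected ideal of P (+) Q lies in one
   summand. In P ^a Q, a connected ideal meeting P contains Q exactly when it
   contains a, so it is determined by its trace on P. In a duplication, a connected
   ideal containing exactly one of a, a' is the principal ideal of a or of a', and
   these two are each other's only neighbours; otherwise identifying a' with a is a
   retraction onto the hanging.

   Conversely, induct on |P|. A disconnected P is a disjoint union. Otherwise pick a
   maximal m1. If m1 is the greatest element, P is {m1} ^m1 (P - m1). If not, some
   maximal m2 <> m1 shares a lower bound with m1, and since the principal ideal of m1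
   has at most one neighbour, m2 is the only such maximal element. Then the elements
   strictly below m1 and not below m2 form an ideal hanging below m1; if there are
   none, and symmetrically for m2, all other elements lie below both m1 and m2, and P
   is ({m1} ^m1 (P - {m1, m2}))^(m1) with m2 as the copy of m1. *)

From mathcomp Require Import all_boot.
Set Implicit Arguments. Unset Strict Implicit. Unset Printing Implicit Defensive.

(** * Connected ideals and the graph Gamma(P) *)

Lemma connect_homo (T T' : finType) (e : rel T) (e' : rel T') (f : T -> T') :
  {homo f : x y / e x y >-> e' x y} ->
  forall x y, connect e x y -> connect e' (f x) (f y).
Proof.
move=> fh x y /connectP[p ep ->]; apply/connectP; exists (map f p).
  exact: homo_path ep.
by rewrite last_map.
Qed.

Section ConnectedIdeals.
Variables (T : finType) (r : rel T).

Lemma order_idealP (J : {set T}) :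
  reflect (forall x y, y \in J -> r x y -> x \in J) (order_ideal r J).
Proof.
apply: (iffP forallP) => [H x y yJ rxy | H x].
  by have /forallP/(_ y)/implyP := H x; apply; rewrite yJ.
by apply/forallP=> y; apply/implyP=> /andP[]; apply: H.
Qed.

Definition comparable_in (J : {set T}) : rel T :=
  fun x y => [&& x \in J, y \in J & r x y || r y x].

Definition comparably_connected (J : {set T}) : Prop :=
  {in J &, forall x y, connect (comparable_in J) x y}.

Definition connected_ideal (J : {set T}) : Prop :=
  [/\ order_ideal r J, J != set0 & comparably_connected J].

Definition gamma_adjacent (J K : {set T}) : Prop :=
  connected_ideal K /\ intersect_nontriv J K.

Definition gamma_deg_le1 : Prop :=
  forall J K1 K2, connected_ideal J ->
    gamma_adjacent J K1 -> gamma_adjacent J K2 -> K1 = K2.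

Lemma comparable_in_sym (J : {set T}) : symmetric (comparable_in J).
Proof. by move=> x y; rewrite /comparable_in andbCA orbC. Qed.

Lemma hasse_in_sym (J : {set T}) : symmetric (hasse_in r J).
Proof. by move=> x y; rewrite /hasse_in orbC. Qed.

(* Split the pair at a strictly intermediate element until it is a cover. *)
Lemma hasse_connect_le (J : {set T}) : partial_order r -> order_ideal r J ->
  forall x y, y \in J -> r x y -> connect (hasse_in r J) x y.
Proof.
case=> rr ra rt /order_idealP iJ.
pose itv x y := [set z | r x z && r z y].
suff IH n x y : #|itv x y| <= n -> y \in J -> r x y -> connect (hasse_in r J) x y.
  by move=> x y; apply: IH (leqnn _).
elim: n x y => [|n IH] x y le_n yJ rxy.
  by move: le_n; rewrite leqn0 => /eqP/card0_eq/(_ x); rewrite inE rr rxy.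
case: (eqVneq x y) => [-> //|nxy].
case: (boolP [exists z, [&& z \in J, slt r x z & slt r z y]]); last first.
  rewrite negb_exists => /forallP no_mid; apply: connect1; apply/orP; left.
  by rewrite /cover_in (iJ x y) // yJ /slt rxy nxy; apply/forallP.
case/existsP=> z /and3P[zJ /andP[rxz nxz] /andP[rzy nzy]].
have shorter u v : v \in J -> r u v -> itv u v \proper itv x y ->
    connect (hasse_in r J) u v.
  by move=> vJ ruv /proper_card lt_uv; apply: IH => //; rewrite -ltnS (leq_trans lt_uv).
apply: (connect_trans (y := z)); apply: shorter => //.
- apply/properP; split.
    by apply/subsetP=> w; rewrite !inE => /andP[-> rwz]; apply: rt rwz rzy.
  exists y; first by rewrite !inE rxy rr.
  by rewrite inE rxy /=; apply: contra nzy => ryz; rewrite (ra z y) ?rzy ?ryz.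
- apply/properP; split.
    by apply/subsetP=> w; rewrite !inE => /andP[rzw ->]; rewrite (rt _ _ _ rxz rzw).
  exists x; first by rewrite !inE rxy rr.
  by rewrite inE rxy andbT; apply: contra nxz => rzx; rewrite (ra x z) ?rzx ?rxz.
Qed.

Lemma connected_idealE (J : {set T}) : partial_order r ->
  conn_ideal r J <-> connected_ideal J.
Proof.
move=> po; split.
  case/and3P=> iJ nJ /forallP cJ; split=> // x y xJ yJ.
  have /forallP/(_ y)/implyP := cJ x; rewrite xJ yJ => /(_ isT).
  apply: connect_sub => u v /orP[] /and4P[uJ vJ /andP[ruv _] _]; apply: connect1;
    by rewrite /comparable_in uJ vJ ruv ?orbT.
case=> iJ nJ cJ; apply/and3P; split=> //; apply/forallP=> x; apply/forallP=> y.
apply/implyP=> /andP[xJ yJ].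
apply: connect_sub (cJ x y xJ yJ) => u v /and3P[uJ vJ /orP[] ruv].
  exact: hasse_connect_le.
by rewrite (sym_connect_sym (@hasse_in_sym J)); apply: hasse_connect_le.
Qed.

Lemma gamma_deg_le1E : partial_order r ->
  gamma_deg_le1 <-> forall J, conn_ideal r J -> #|gamma_nbrs r J| <= 1.
Proof.
move=> po; split=> [deg J /(connected_idealE _ po) cJ | deg J K1 K2 cJ [c1 i1] [c2 i2]].
  apply/card_le1_eqP => K1 K2; rewrite !inE => /andP[c1 i1] /andP[c2 i2].
  by apply: (deg J) => //; split=> //; apply/(connected_idealE _ po).
have /card_le1_eqP := deg J (proj2 (connected_idealE _ po) cJ).
by apply; rewrite inE; apply/andP; split=> //; apply/(connected_idealE _ po).
Qed.

Lemma intersect_nontrivC (J K : {set T}) :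
  intersect_nontriv J K = intersect_nontriv K J.
Proof. by rewrite /intersect_nontriv setIC [~~ (K \subset J) && _]andbC. Qed.

Lemma comparably_connected_sub (K : {set T}) (A : {pred T}) x :
  comparably_connected K -> x \in K -> x \in A ->
  (forall u v, u \in K -> v \in K -> r u v || r v u -> u \in A -> v \in A) ->
  {subset K <= A}.
Proof.
move=> cK xK xA closedA y yK.
have cl : closed (comparable_in K) A.
  apply: intro_closed; first exact: sym_connect_sym (@comparable_in_sym K).
  by move=> u v /and3P[uK vK ruv]; apply: closedA.
by rewrite -(closed_connect cl (cK _ _ xK yK)).
Qed.

End ConnectedIdeals.

(** * Transport of the degree bound *)

Section Retraction.
Variables (T T1 : finType) (r : rel T) (r1 : rel T1) (e : T1 -> T) (p : T -> T1).
Hypotheses (r_e : forall x y, r (e x) (e y) = r1 x y) (eK : cancel e p).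

Definition retract_stable (c K : {set T}) : Prop :=
  {in K &, {homo p : u v / r u v >-> r1 u v}} /\
  forall x, (x \in K) = (e (p x) \in K) && (x \in c).

Lemma connected_ideal_preim (K : {set T}) :
  {in K &, {homo p : u v / r u v >-> r1 u v}} -> {in K, forall u, e (p u) \in K} ->
  connected_ideal r K -> connected_ideal r1 (e @^-1: K).
Proof.
move=> p_homo epK [/order_idealP iK nK cK]; split.
- apply/order_idealP => x y; rewrite !inE => yK rxy.
  by apply: iK yK _; rewrite r_e.
- by case/set0Pn: nK => u uK; apply/set0Pn; exists (p u); rewrite inE epK.
- move=> x y; rewrite !inE => xK yK; rewrite -(eK x) -(eK y).
  apply: connect_homo (cK _ _ xK yK) => u v /and3P[uK vK ruv].
  rewrite /comparable_in !inE !epK //=.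
  by case/orP: ruv => ruv; [rewrite p_homo | rewrite (p_homo v u) ?orbT].
Qed.

Lemma retract_stable_mem (c K : {set T}) u :
  retract_stable c K -> u \in K -> e (p u) \in K.
Proof. by case=> _ ->; case/andP. Qed.

Lemma retract_stable_preim (c K : {set T}) :
  retract_stable c K -> connected_ideal r K -> connected_ideal r1 (e @^-1: K).
Proof.
move=> sK; apply: connected_ideal_preim; first by case: sK.
by move=> u; apply: retract_stable_mem sK.
Qed.

Lemma intersect_nontriv_preim (c A B : {set T}) :
  retract_stable c A -> retract_stable c B ->
  intersect_nontriv A B -> intersect_nontriv (e @^-1: A) (e @^-1: B).
Proof.
move=> sA sB /and3P[/set0Pn[x]]; rewrite inE => /andP[xA xB] nAB nBA.
have not_sub (X Y : {set T}) : retract_stable c X -> retract_stable c Y ->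
    ~~ (X \subset Y) -> ~~ (e @^-1: X \subset e @^-1: Y).
  move=> [_ sX] [_ sY] /subsetPn[y]; rewrite sX sY => /andP[yX yc] yY.
  by rewrite yc andbT in yY; apply/subsetPn; exists (p y); rewrite inE.
apply/and3P; split; [|exact: not_sub | exact: not_sub].
by apply/set0Pn; exists (p x); rewrite !inE (retract_stable_mem sA) ?(retract_stable_mem sB).
Qed.

Lemma retract_stable_inj (c A B : {set T}) :
  retract_stable c A -> retract_stable c B -> e @^-1: A = e @^-1: B -> A = B.
Proof.
move=> [_ sA] [_ sB] eqAB; apply/setP=> x; rewrite sA sB.
by have /setP/(_ (p x)) := eqAB; rewrite !inE => ->.
Qed.

Lemma gamma_adjacent_unique_retract (c J : {set T}) :
  gamma_deg_le1 r1 -> connected_ideal r J ->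
  (forall K, K = J \/ gamma_adjacent r J K -> retract_stable c K) ->
  forall K1 K2, gamma_adjacent r J K1 -> gamma_adjacent r J K2 -> K1 = K2.
Proof.
move=> deg1 cJ stable K1 K2 adj1 adj2.
have sJ := stable J (or_introl erefl).
have s1 := stable K1 (or_intror adj1); have s2 := stable K2 (or_intror adj2).
have adj_preim K : retract_stable c K -> gamma_adjacent r J K ->
    gamma_adjacent r1 (e @^-1: J) (e @^-1: K).
  move=> sK [cK iK]; split; first exact: retract_stable_preim sK cK.
  exact: intersect_nontriv_preim sK iK.
apply: (retract_stable_inj s1 s2).
exact: deg1 (retract_stable_preim sJ cJ) (adj_preim _ s1 adj1) (adj_preim _ s2 adj2).
Qed.

Lemma gamma_adjacent_unique_on (S J : {set T}) :
  {in S, forall x, e (p x) = x} -> gamma_deg_le1 r1 ->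
  J \subset S -> (forall K, gamma_adjacent r J K -> K \subset S) -> connected_ideal r J ->
  forall K1 K2, gamma_adjacent r J K1 -> gamma_adjacent r J K2 -> K1 = K2.
Proof.
move=> pK deg1 JS adjS cJ; apply: (gamma_adjacent_unique_retract (c := S)) => // K KJ.
have /subsetP sK : K \subset S by case: KJ => [->|/adjS].
split.
- by move=> u v uK vK; rewrite -r_e !pK ?sK.
- move=> x; case xS: (x \in S); first by rewrite pK ?andbT.
  by rewrite andbF; apply/negbTE; apply: contraFN xS => /sK.
Qed.

End Retraction.

Lemma gamma_deg_le1_lift (T T1 : finType) (r : rel T) (r1 : rel T1) (e : T1 -> T)
    (lift : {set T1} -> {set T}) :
  (forall K, e @^-1: lift K = K) ->
  (forall K, connected_ideal r1 K -> connected_ideal r (lift K)) ->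
  gamma_deg_le1 r -> gamma_deg_le1 r1.
Proof.
move=> liftK lift_conn deg J K1 K2 cJ [c1 i1] [c2 i2].
have mem_lift A x : (e x \in lift A) = (x \in A) by rewrite -{2}(liftK A) inE.
have lift_nontriv A B : intersect_nontriv A B -> intersect_nontriv (lift A) (lift B).
  case/and3P=> /set0Pn[x]; rewrite inE => /andP[xA xB] nAB nBA; apply/and3P; split.
  - by apply/set0Pn; exists (e x); rewrite inE !mem_lift xA.
  - by case/subsetPn: nAB => y yA yB; apply/subsetPn; exists (e y); rewrite mem_lift.
  - by case/subsetPn: nBA => y yB yA; apply/subsetPn; exists (e y); rewrite mem_lift.
have adj A : connected_ideal r1 A -> intersect_nontriv J A ->
    gamma_adjacent r (lift J) (lift A).
  by move=> cA iA; split; [apply: lift_conn | apply: lift_nontriv].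
by rewrite -(liftK K1) -(liftK K2) (deg _ _ _ (lift_conn _ cJ) (adj _ c1 i1) (adj _ c2 i2)).
Qed.

Lemma partial_order_iso (T T' : finType) (r : rel T) (r' : rel T') (f : T -> T') :
  bijective f -> (forall x y, r' (f x) (f y) = r x y) ->
  partial_order r -> partial_order r'.
Proof.
case=> g fK gK r_f [rr ra rt].
have r'E u v : r' u v = r (g u) (g v) by rewrite -r_f !gK.
split=> [u | u v | v u w]; rewrite ?r'E //.
- by move=> /ra /(congr1 f); rewrite !gK.
- exact: rt.
Qed.

Lemma gamma_deg_le1_iso (T T' : finType) (r : rel T) (r' : rel T') (f : T -> T') :
  bijective f -> (forall x y, r' (f x) (f y) = r x y) ->
  gamma_deg_le1 r -> gamma_deg_le1 r'.
Proof.
case=> g fK gK r_f deg J K1 K2 cJ.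
by apply: (gamma_adjacent_unique_on (S := setT) r_f fK) => // [x _ | |K _];
  rewrite ?gK ?subsetT.
Qed.

Lemma po_deg_le1_eq (T : finType) (r r' : rel T) : r' =2 r ->
  partial_order r -> gamma_deg_le1 r -> partial_order r' /\ gamma_deg_le1 r'.
Proof.
move=> rr' po deg; have id_bij : bijective (@id T) by exists id.
have r_id x y : r' (id x) (id y) = r x y by apply: rr'.
by split; [apply: partial_order_iso id_bij r_id po | apply: gamma_deg_le1_iso id_bij r_id deg].
Qed.

Definition is_inl (T1 T2 : Type) (x : T1 + T2) : bool := if x is inl _ then true else false.

Lemma connect_eq_preorder (T : finType) (e R : rel T) :
  reflexive R -> transitive R -> subrel e R -> subrel R (connect e) -> connect e =2 R.
Proof.
move=> rR tR eR Re x y; apply/idP/idP; last exact: Re.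
case/connectP=> p; elim: p x => [|z p IH] x /=; first by move=> _ ->.
by case/andP=> exz pz ly; apply: tR (eR _ _ exz) (IH _ pz ly).
Qed.

(** * Forests with duplications satisfy the degree bound *)

Section Constructions.
Variables (T1 T2 : finType) (r1 : rel T1) (r2 : rel T2) (a : T1).
Hypotheses (po1 : partial_order r1) (po2 : partial_order r2).

Definition hang_le : rel (T1 + T2) :=
  fun x y => match x, y with
  | inl x, inl y => r1 x y
  | inr x, inr y => r2 x y
  | inr _, inl y => r1 a y
  | inl _, inr _ => false end.

(* [None] is the new element a'. *)
Definition dup_le : rel (option (T1 + T2)) :=
  fun x y => match x, y with
  | Some x, Some y => hang_le x y
  | Some x, None => ~~ is_inl x
  | None, Some y => if y is inl q then r1 a q && (q != a) else false
  | None, None => true end.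

Lemma dunion_po : partial_order (dunion_rel r1 r2).
Proof.
case: po1 po2 => rr1 ra1 rt1 [rr2 ra2 rt2]; split.
- by case=> x /=.
- by move=> [x|x] [y|y] //=; [move/ra1-> | move/ra2->].
- by move=> [y|y] [x|x] [z|z] //=; [apply: rt1 | apply: rt2].
Qed.

Lemma hang_le_po : partial_order hang_le.
Proof.
case: po1 po2 => rr1 ra1 rt1 [rr2 ra2 rt2]; split.
- by case=> x /=.
- by move=> [x|x] [y|y] //=; [move/ra1-> | rewrite andbF | move/ra2->].
- by move=> [y|y] [x|x] [z|z] //=; try exact: rt1; try exact: rt2.
Qed.

Lemma hang_relE : hang_rel r1 r2 a =2 hang_le.
Proof.
have [rr1 _ _] := po1; have [rr _ rt] := hang_le_po.
apply: connect_eq_preorder => //.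
- move=> [x|x] [y|y]; rewrite /hang_base /= ?orbF //.
  by move/eqP->; apply: rr1.
- move=> [x|x] [y|y] //= xy.
  + by apply: connect1; rewrite /hang_base /= xy.
  + apply: (connect_trans (y := inl a)); apply: connect1.
      by rewrite /hang_base /= eqxx.
    by rewrite /hang_base /= xy.
  + by apply: connect1; rewrite /hang_base /= xy.
Qed.

Lemma dup_le_po : partial_order dup_le.
Proof.
have [rr1 ra1 rt1] := po1; have [rr2 ra2 rt2] := po2; split.
- by case=> [[x|x]|] //=; by [apply: rr1 | apply: rr2].
- move=> [[x|x]|] [[y|y]|] //=; rewrite ?andbF //.
  + by move/ra1->.
  + by move/ra2->.
- move=> [[y|y]|] [[x|x]|] [[z|z]|] //=; try exact: rt1; try exact: rt2.
  + move=> /andP[ray nya] ryz; rewrite (rt1 _ _ _ ray ryz) /=.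
    by apply: contra nya => /eqP eza; rewrite eza in ryz; rewrite (ra1 y a) ?ray ?ryz.
  + by move=> _ /andP[].
Qed.

Lemma dup_relE : dup_rel r1 r2 a =2 dup_le.
Proof.
have [rr _ rt] := dup_le_po.
apply: connect_eq_preorder => //.
- by move=> [[x|x]|] [[y|y]|]; rewrite /dup_base /= ?hang_relE.
- move=> x y xy; apply: connect1; move: xy.
  by case: x => [[x|x]|]; case: y => [[y|y]|]; rewrite /dup_base /= ?hang_relE.
Qed.

Lemma comparably_connected_one_side (K : {set T1 + T2}) x y :
  comparably_connected (dunion_rel r1 r2) K -> x \in K -> y \in K -> is_inl y = is_inl x.
Proof.
move=> cK xK yK.
have /(_ y yK)/eqP // : {subset K <= [pred z | is_inl z == is_inl x]}.
apply: (comparably_connected_sub cK xK); first by rewrite inE.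
by move=> [u|u] [v|v].
Qed.

Lemma gamma_deg_le1_union :
  gamma_deg_le1 r1 -> gamma_deg_le1 r2 -> gamma_deg_le1 (dunion_rel r1 r2).
Proof.
move=> deg1 deg2 J K1 K2 cJ; move: K1 K2.
have [_ /set0Pn[j jJ] cJc] := cJ.
pose S := [set x : T1 + T2 | is_inl x == is_inl j].
have JS : J \subset S.
  by apply/subsetP=> x xJ; rewrite inE (comparably_connected_one_side cJc jJ xJ).
have adjS K : gamma_adjacent (dunion_rel r1 r2) J K -> K \subset S.
  case=> [[_ _ cK] /and3P[/set0Pn[z] + _ _]]; rewrite inE => /andP[zJ zK].
  apply/subsetP=> x xK; rewrite inE (comparably_connected_one_side cK zK xK).
  by rewrite (comparably_connected_one_side cJc jJ zJ).
case: j jJ @S JS adjS => j _ S JS adjS.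
- apply: (gamma_adjacent_unique_on (e := inl) (p := fun x => if x is inl y then y else j))
    deg1 JS adjS cJ => //.
  by move=> [x|x]; rewrite inE.
- apply: (gamma_adjacent_unique_on (e := inr) (p := fun x => if x is inr y then y else j))
    deg2 JS adjS cJ => //.
  by move=> [x|x]; rewrite inE.
Qed.

Lemma hang_mem_left (K : {set T1 + T2}) p q : connected_ideal hang_le K ->
  inl p \in K -> inr q \in K -> inl a \in K.
Proof.
case=> /order_idealP iK _ cK pK; apply: contraTT => aK.
have Kl : {subset K <= [pred x | is_inl x]}.
  apply: (comparably_connected_sub cK pK) => // - [u|u] [v|v] uK vK //= rau _.
  by move: aK; rewrite (iK (inl a) _ uK rau).
by apply/negP => /Kl.
Qed.

Lemma hang_mem_right (K : {set T1 + T2}) q : order_ideal hang_le K ->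
  inl a \in K -> inr q \in K.
Proof. by have [rr1 _ _] := po1; move=> /order_idealP iK aK; exact: (iK (inr q) _ aK (rr1 a)). Qed.

Lemma hang_sub_of_right (J K : {set T1 + T2}) p :
  connected_ideal hang_le K -> inl p \in K -> {subset J <= [pred x | ~~ is_inl x]} ->
  J :&: K != set0 -> J \subset K.
Proof.
move=> cK pK Jr /set0Pn[z]; rewrite inE => /andP[zJ zK].
case: z zJ zK (Jr z zJ) => // z _ zK _.
have aK := hang_mem_left cK pK zK; have [iK _ _] := cK.
by apply/subsetP=> - [x /Jr //|x _]; apply: hang_mem_right.
Qed.

Lemma gamma_deg_le1_hang :
  gamma_deg_le1 r1 -> gamma_deg_le1 r2 -> gamma_deg_le1 hang_le.
Proof.
move=> deg1 deg2 J K1 K2 cJ; move: K1 K2.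
have [_ nJ _] := cJ; have [rr1 _ _] := po1.
case: (boolP [exists p, inl p \in J]) => [/existsP[j jJ] | /existsPn Jr].
  have left_mem K : K = J \/ gamma_adjacent hang_le J K -> exists p, inl p \in K.
    case=> [-> | [cK /and3P[meet _ nKJ]]]; first by exists j.
    apply/existsP; apply: contraR nKJ => /existsPn Kr.
    apply: hang_sub_of_right cJ jJ _ _; last by rewrite setIC.
    by move=> [x xK|//]; have := Kr x; rewrite xK.
  apply: (gamma_adjacent_unique_retract (e := inl) (p := fun x => if x is inl y then y else a)
    _ _ (c := setT) deg1 cJ) => // K KJ.
  have [p pK] := left_mem K KJ.
  have cK : connected_ideal hang_le K by case: KJ => [->|[]].
  split; first by move=> [u|u] [v|v] //= _ _ _; apply: rr1.
  move=> [x|x]; rewrite inE andbT //.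
  apply/idP/idP => [xK | aK]; first exact: hang_mem_left cK pK xK.
  by case: cK => iK _ _; apply: hang_mem_right.
have Jr' : {subset J <= [pred x | ~~ is_inl x]} by move=> [x xJ|//]; have := Jr x; rewrite xJ.
have [q0 q0J] : exists q, inr q \in J.
  by case/set0Pn: nJ => - [x xJ|x]; [have := Jr x; rewrite xJ | exists x].
apply: (gamma_adjacent_unique_on (e := inr) (p := fun x => if x is inr y then y else q0)
  _ _ (S := [set x | ~~ is_inl x]) _ deg2) cJ => //.
- by move=> [x|x]; rewrite inE.
- by apply/subsetP=> x /Jr'; rewrite inE.
- move=> K [cK /and3P[meet nJK _]]; apply/subsetP=> - [p pK|x]; rewrite inE //.
  by case/negP: nJK; apply: hang_sub_of_right cK pK Jr' meet.
Qed.
End Constructions.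

Section Duplication.
Variables (T1 T2 : finType) (r1 : rel T1) (r2 : rel T2) (a : T1).
Hypotheses (po1 : partial_order r1) (mina : minimal_in r1 a).

Local Notation a' := (@None (T1 + T2)).
Local Notation sa := (Some (inl a) : option (T1 + T2)).
Local Notation dle := (dup_le r1 r2 a).

Definition dup_Q2 : {set option (T1 + T2)} :=
  [set x | if x is Some (inr _) then true else false].

Lemma dup_ideal_down_a' (K : {set option (T1 + T2)}) : connected_ideal dle K ->
  a' \in K -> sa \notin K -> K = a' |: dup_Q2.
Proof.
move=> [/order_idealP iK _ cK] a'K saK; apply/setP=> x; apply/idP/idP.
  move=> xK; apply: (comparably_connected_sub cK a'K) xK; first by rewrite !inE.
  move=> [[u|u]|] [[v|v]|] uK vK; rewrite !inE //=.
  + by rewrite orbF => rav _; move: saK; rewrite (iK sa _ vK rav).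
  + by rewrite orbF => /andP[rav _] _; move: saK; rewrite (iK sa _ vK rav).
by rewrite !inE; case: x => [[x|x]|] // _; apply: iK a'K _.
Qed.

Lemma dup_ideal_down_a (K : {set option (T1 + T2)}) : connected_ideal dle K ->
  sa \in K -> a' \notin K -> K = sa |: dup_Q2.
Proof.
have [rr1 _ _] := po1.
move=> [/order_idealP iK _ cK] saK a'K.
have above_a v : Some (inl v) \in K -> r1 a v -> v = a.
  move=> vK rav; apply/eqP; apply: contraNT a'K => nva.
  by apply: (iK a' _ vK); rewrite /= rav.
apply/setP=> x; apply/idP/idP.
  move=> xK; apply: (comparably_connected_sub cK saK) xK; first by rewrite !inE eqxx.
  move=> [[u|u]|] [[v|v]|] uK vK; rewrite !inE ?orbF //=.
  + move=> ruv /eqP[eua]; rewrite eua in ruv uK.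
    by case/orP: ruv => [/(above_a _ vK) | /mina] ->.
  + by move=> /andP[_ nua] /eqP[eua]; rewrite eua eqxx in nua.
  + by move=> rav _; rewrite (above_a v vK rav).
  + by move=> _ _; move: a'K; rewrite vK.
rewrite !inE; case: x => [[x|x]|] //=; rewrite ?orbF; first by move/eqP=> ->.
by move=> _; apply: (iK (Some (inr x)) _ saK (rr1 a)).
Qed.

Lemma dup_ideal_sub_Q2 (K : {set option (T1 + T2)}) d : connected_ideal dle K ->
  a' \notin K -> sa \notin K -> Some (inr d) \in K -> K \subset dup_Q2.
Proof.
move=> [/order_idealP iK _ cK] a'K saK dK; apply/subsetP => x xK.
apply: (comparably_connected_sub cK dK) xK; first by rewrite inE.
move=> [[u|u]|] [[v|v]|] uK vK; rewrite !inE //=.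
+ by rewrite orbF => rav _; move: saK; rewrite (iK sa _ vK rav).
+ by move=> _ _; move: a'K; rewrite vK.
Qed.

Lemma dup_down_a_sub (K : {set option (T1 + T2)}) :
  order_ideal dle K -> sa \in K -> sa |: dup_Q2 \subset K.
Proof.
have [rr1 _ _] := po1; move=> /order_idealP iK saK.
apply/subsetP=> - [[x|x]|]; rewrite !inE //= ?orbF; first by move/eqP=> ->.
by move=> _; apply: (iK (Some (inr x)) _ saK (rr1 a)).
Qed.

Lemma dup_down_a'_sub (K : {set option (T1 + T2)}) :
  order_ideal dle K -> a' \in K -> a' |: dup_Q2 \subset K.
Proof.
move=> /order_idealP iK a'K.
by apply/subsetP=> - [[x|x]|]; rewrite !inE //= => _; apply: (iK _ _ a'K).
Qed.

Lemma dup_adjacent_down_a (K : {set option (T1 + T2)}) :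
  gamma_adjacent dle (sa |: dup_Q2) K -> K = a' |: dup_Q2.
Proof.
move=> [cK /and3P[/set0Pn[z zTK] nTK nKT]]; have [iK _ _] := cK.
have saK : sa \notin K by apply/negP=> saK; case/negP: nTK; apply: dup_down_a_sub.
case a'K : (a' \in K); first exact: dup_ideal_down_a'.
case: z zTK => [[z|z]|]; rewrite !inE //= ?orbF.
  by case/andP=> /eqP[->] zK; rewrite zK in saK.
move=> zK.
case/negP: nKT; apply: subset_trans (dup_ideal_sub_Q2 cK _ saK zK) _; first by rewrite a'K.
exact: subsetUr.
Qed.

Lemma dup_adjacent_down_a' (K : {set option (T1 + T2)}) :
  gamma_adjacent dle (a' |: dup_Q2) K -> K = sa |: dup_Q2.
Proof.
move=> [cK /and3P[/set0Pn[z zTK] nTK nKT]]; have [iK _ _] := cK.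
have a'K : a' \notin K by apply/negP=> a'K; case/negP: nTK; apply: dup_down_a'_sub.
case saK : (sa \in K); first exact: dup_ideal_down_a.
case: z zTK => [[z|z]|]; rewrite !inE //= ?orbF; last by move=> zK; rewrite zK in a'K.
move=> zK.
case/negP: nKT; apply: subset_trans (dup_ideal_sub_Q2 cK a'K _ zK) _; first by rewrite saK.
exact: subsetUr.
Qed.

(* Identifying a' with a retracts the duplication onto the hanging. *)
Lemma dup_adjacent_unique_balanced (J : {set option (T1 + T2)}) :
  gamma_deg_le1 (hang_le r1 r2 a) -> connected_ideal dle J -> (sa \in J) = (a' \in J) ->
  forall K1 K2, gamma_adjacent dle J K1 -> gamma_adjacent dle J K2 -> K1 = K2.
Proof.
have [rr1 _ _] := po1; move=> degH cJ saJ.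
apply: (gamma_adjacent_unique_retract (e := Some) (p := fun x => if x is Some y then y else inl a)
  _ _ (c := setT) degH cJ) => // K KJ; split.
  by move=> [[u|u]|] [[v|v]|] _ _ //=; rewrite ?rr1 // => /andP[].
case=> [x|]; rewrite inE andbT //.
case: KJ => [->|[cK iK]]; first by rewrite saJ.
have iJ : intersect_nontriv K J by rewrite intersect_nontrivC.
case saK: (sa \in K); case a'K: (a' \in K) => //.
- rewrite (dup_ideal_down_a cK saK (negbT a'K)) in iJ.
  by move: saJ; rewrite (dup_adjacent_down_a (conj cJ iJ)) !inE.
- rewrite (dup_ideal_down_a' cK a'K (negbT saK)) in iJ.
  by move: saJ; rewrite (dup_adjacent_down_a' (conj cJ iJ)) !inE eqxx.
Qed.

Lemma gamma_deg_le1_dup : gamma_deg_le1 (hang_le r1 r2 a) -> gamma_deg_le1 dle.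
Proof.
move=> degH J K1 K2 cJ.
case saJ: (sa \in J); case a'J: (a' \in J);
  try by apply: dup_adjacent_unique_balanced; rewrite ?saJ ?a'J.
- rewrite (dup_ideal_down_a cJ saJ (negbT a'J)) => adj1 adj2.
  by rewrite (dup_adjacent_down_a adj1) (dup_adjacent_down_a adj2).
- rewrite (dup_ideal_down_a' cJ a'J (negbT saJ)) => adj1 adj2.
  by rewrite (dup_adjacent_down_a' adj1) (dup_adjacent_down_a' adj2).
Qed.
End Duplication.

Lemma fwd_po_deg_le1 (T : finType) (r : rel T) :
  fwd r -> [/\ partial_order r, gamma_deg_le1 r & 0 < #|T|].
Proof.
elim=> {T r} [|T T' r r' f _ [po deg n] bij r_f
             |T1 T2 r1 r2 _ [po1 deg1 n1] _ [po2 deg2 n2]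
             |T1 T2 r1 r2 a _ [po1 deg1 n1] _ [po2 deg2 n2]
             |T1 T2 r1 r2 a _ [po1 deg1 n1] _ [po2 deg2 n2] mina].
- split; last by apply/card_gt0P; exists tt.
    by split=> [x | [] [] | y x z].
  move=> J K1 K2 _ [[_ /set0Pn[y yK] _] /and3P[_ nJK _]].
  by case/negP: nJK; apply/subsetP=> x _; case: x; case: y yK.
- split; first exact: partial_order_iso bij r_f po.
    exact: gamma_deg_le1_iso bij r_f deg.
  by rewrite -(bij_eq_card bij).
- split; [exact: dunion_po | exact: gamma_deg_le1_union | by rewrite card_sum ltn_addr].
- have [po deg] := po_deg_le1_eq (hang_relE a po1 po2) (hang_le_po a po1 po2)
    (gamma_deg_le1_hang (a := a) po1 deg1 deg2).
  by split=> //; rewrite card_sum ltn_addr.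
- have [po deg] := po_deg_le1_eq (dup_relE a po1 po2) (dup_le_po a po1 po2)
    (gamma_deg_le1_dup po1 mina (gamma_deg_le1_hang (a := a) po1 deg1 deg2)).
  by split=> //; rewrite card_option.
Qed.

(** * Posets satisfying the degree bound are forests with duplications *)

Definition induced (T : finType) (r : rel T) (S : {set T}) : rel {x : T | x \in S} :=
  fun x y => r (val x) (val y).
Arguments induced {T} r S.

Section Induced.
Variables (T : finType) (r : rel T).

(* For an ideal Q, r is then the complement of Q with Q hung below a. *)
Definition pendant (Q : {set T}) (a : T) : Prop :=
  forall q p, q \in Q -> p \notin Q -> r q p = r a p.

Lemma induced_po (S : {set T}) : partial_order r -> partial_order (induced r S).
Proof. by case=> rr ra rt; split=> [x | x y /ra /val_inj | y x z]; [apply: rr | | apply: rt]. Qed.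

Lemma gamma_deg_le1_ideal (S : {set T}) :
  order_ideal r S -> gamma_deg_le1 r -> gamma_deg_le1 (induced r S).
Proof.
move=> /order_idealP iS; apply: (gamma_deg_le1_lift (e := val) (lift := fun K => val @: K)).
  by move=> K; apply/setP=> x; rewrite inE mem_imset //; apply: val_inj.
move=> K [/order_idealP iK nK cK]; split.
- apply/order_idealP=> x _ /imsetP[y yK ->] rxy.
  have xS : x \in S := iS x _ (valP y) rxy.
  by rewrite -[x]/(val (Sub x xS : {x | x \in S})) imset_f // (iK _ y).
- by case/set0Pn: nK => x xK; apply/set0Pn; exists (val x); apply: imset_f.
- move=> _ _ /imsetP[u uK ->] /imsetP[v vK ->].
  apply: connect_homo (cK _ _ uK vK) => x y /and3P[xK yK rxy].
  by rewrite /comparable_in !imset_f.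
Qed.
End Induced.

Section Pendant.
Variables (T : finType) (r : rel T) (Q : {set T}) (a : {x : T | x \in ~: Q}).
Hypotheses (rr : reflexive r) (iQ : order_ideal r Q) (pQ : pendant r Q (val a)).

Let lift (K : {set {x : T | x \in ~: Q}}) : {set T} :=
  val @: K :|: (if a \in K then Q else set0).

Let notin_Q (x : {x : T | x \in ~: Q}) : val x \notin Q.
Proof. by have := valP x; rewrite inE. Qed.

Let lift_Q K q : q \in Q -> (q \in lift K) = (a \in K).
Proof.
move=> qQ; rewrite inE; case aK: (a \in K); rewrite ?qQ ?orbT ?inE ?orbF //.
by apply/imsetP=> - [q' _ e]; move: (notin_Q q'); rewrite -e qQ.
Qed.

Let lift_val K x : (val x \in lift K) = (x \in K).
Proof.
rewrite inE mem_imset; last exact: val_inj.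
by case: (a \in K); rewrite ?inE ?(negbTE (notin_Q x)) orbF.
Qed.

Lemma connected_ideal_pendant_lift K :
  connected_ideal (induced r (~: Q)) K -> connected_ideal r (lift K).
Proof.
move=> [/order_idealP iK nK cK]; move/order_idealP: iQ => iQ'.
have lift_sub u : u \in lift K -> u \notin Q -> exists2 u', u' \in K & u = val u'.
  move=> uK uQ; have uQ' : u \in ~: Q by rewrite inE.
  by exists (Sub u uQ'); rewrite // -lift_val.
split.
- apply/order_idealP=> x y yK rxy; case yQ: (y \in Q).
    by rewrite lift_Q ?(iQ' x y) // -(lift_Q K yQ).
  have [y' y'K ey] := lift_sub y yK (negbT yQ); subst y.
  case xQ: (x \in Q).
    by rewrite lift_Q //; apply: (iK a y' y'K); rewrite /induced -(pQ xQ (notin_Q y')).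
  have xQ' : x \in ~: Q by rewrite inE xQ.
  by rewrite -[x]/(val (Sub x xQ' : {x | x \in ~: Q})) lift_val (iK _ y').
- by case/set0Pn: nK => x xK; apply/set0Pn; exists (val x); rewrite lift_val.
- have to_val u : u \in lift K ->
      exists2 u', u' \in K & connect (comparable_in r (lift K)) u (val u').
    move=> uK; case uQ: (u \in Q); last first.
      by have [u' u'K ->] := lift_sub u uK (negbT uQ); exists u'.
    have aK : a \in K by rewrite -(lift_Q K uQ).
    exists a => //; apply: connect1.
    by rewrite /comparable_in uK lift_val aK (pQ uQ (notin_Q a)) rr.
  have val_conn x y : x \in K -> y \in K ->
      connect (comparable_in r (lift K)) (val x) (val y).
    move=> xK yK; apply: connect_homo (cK _ _ xK yK) => u v /and3P[uK vK ruv].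
    by rewrite /comparable_in !lift_val uK vK.
  move=> u v uK vK; have [u' u'K cu] := to_val u uK; have [v' v'K cv] := to_val v vK.
  apply: connect_trans cu (connect_trans (val_conn _ _ u'K v'K) _).
  by rewrite (sym_connect_sym (@comparable_in_sym _ r _)).
Qed.

Lemma gamma_deg_le1_pendant : gamma_deg_le1 r -> gamma_deg_le1 (induced r (~: Q)).
Proof.
apply: (gamma_deg_le1_lift (e := val) (lift := lift)); last exact: connected_ideal_pendant_lift.
by move=> K; apply/setP=> x; rewrite inE lift_val.
Qed.
End Pendant.

Lemma sum_sub_bij (T : finType) (S1 S2 : {set T}) (x1 : {x : T | x \in S1})
    (x2 : {x : T | x \in S2}) :
  (forall x, (x \in S2) = (x \notin S1)) ->
  bijective (fun x : {x : T | x \in S1} + {x : T | x \in S2} =>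
               match x with inl y => val y | inr y => val y end).
Proof.
move=> S2E; exists (fun t => if t \in S1 then inl (insubd x1 t) else inr (insubd x2 t)).
  case=> y /=; first by rewrite (valP y) valKd.
  by have := valP y; rewrite S2E => /negbTE ->; rewrite valKd.
by move=> t; case tS: (t \in S1) => /=; rewrite val_insubd /= ?tS // S2E tS.
Qed.

Definition maximal_in (T : finType) (r : rel T) (m : T) : Prop := forall x, r m x -> x = m.

Section Reconstruction.
Variables (T : finType) (r : rel T).
Hypothesis po : partial_order r.

Lemma fwd_of_split (S : {set T}) (x1 : {x : T | x \in S}) (x2 : {x : T | x \in ~: S}) :
  (forall x y, r x y -> (x \in S) = (y \in S)) ->
  fwd (induced r S) -> fwd (induced r (~: S)) -> fwd r.
Proof.
move=> closedS f1 f2.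
have S2E x : (x \in ~: S) = (x \notin S) by rewrite inE.
apply: (fwd_iso (fwd_union f1 f2) (sum_sub_bij x1 x2 S2E)).
have out (y : {x : T | x \in ~: S}) : val y \notin S by rewrite -S2E (valP y).
move=> [x|x] [y|y] //=; apply/negbTE.
  by apply: contra (out y) => /closedS; rewrite (valP x) => <-.
by apply: contra (out x) => /closedS; rewrite (valP y) => ->.
Qed.

Lemma fwd_of_pendant (Q : {set T}) (a : {x : T | x \in ~: Q}) (q0 : {x : T | x \in Q}) :
  order_ideal r Q -> pendant r Q (val a) ->
  fwd (induced r (~: Q)) -> fwd (induced r Q) -> fwd r.
Proof.
move=> /order_idealP iQ pQ f1 f2.
have QE x : (x \in Q) = (x \notin ~: Q) by rewrite inE negbK.
apply: (fwd_iso (fwd_hang a f1 f2) (sum_sub_bij a q0 QE)).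
have out (y : {x : T | x \in ~: Q}) : val y \notin Q by have := valP y; rewrite inE.
move=> x y; rewrite hang_relE; try exact: induced_po.
case: x y => x [] y //=; last by rewrite (pQ _ _ (valP x) (out y)).
by apply/negbTE; apply: contra (out x) => /iQ; apply; apply: valP.
Qed.

Lemma fwd_of_twins (m1 m2 : T) (d : {x : T | x \in ~: [set m1; m2]}) :
  m1 != m2 -> maximal_in r m1 -> maximal_in r m2 ->
  {in ~: [set m1; m2], forall x, r x m1 && r x m2} ->
  fwd (induced r (~: [set m1; m2])) -> fwd r.
Proof.
move=> n12 max1 max2 below fD; have [rr ra rt] := po.
set D := ~: [set m1; m2] in d below fD *.
have inD (x : {x : T | x \in D}) : (val x != m1) && (val x != m2).
  by have := valP x; rewrite !inE negb_or.
pose f (x : option (unit + {x : T | x \in D})) :=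
  match x with None => m2 | Some (inl _) => m1 | Some (inr x) => val x end.
have f_bij : bijective f.
  exists (fun t => if t == m2 then None else if t == m1 then Some (inl tt)
                   else Some (inr (insubd d t))).
    case=> [[[]|x]|] /=; [by rewrite (negbTE n12) eqxx | | by rewrite eqxx].
    by case/andP: (inD x) => /negbTE -> /negbTE ->; rewrite valKd.
  move=> t; case: (eqVneq t m2) => [-> //|n2]; case: (eqVneq t m1) => [-> //|n1] /=.
  by rewrite val_insubd /D !inE negb_or n1 n2.
have po_unit : partial_order (fun _ _ : unit => true) by split=> [x | [] [] | y x z].
have min_tt : minimal_in (fun _ _ : unit => true) tt by move=> [].
apply: (fwd_iso (@fwd_dup _ _ _ _ tt fwd_one fD min_tt) f_bij).
move=> x y; rewrite dup_relE //; last exact: induced_po.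
case: x => [[[]|x]|]; case: y => [[[]|y]|] /=; rewrite ?rr //.
- by apply/negP => /max1 e1; case/andP: (inD y) => /eqP.
- by apply/negbTE; apply: contra n12 => /max1 ->.
- by case/andP: (below _ (valP x)).
- by case/andP: (below _ (valP x)).
- by apply/negbTE; apply: contra n12 => /max2 ->.
- by apply/negP => /max2 e2; case/andP: (inD y) => _ /eqP.
Qed.
End Reconstruction.

Section Maxima.
Variables (T : finType) (r : rel T).
Hypothesis po : partial_order r.

Definition principal (m : T) : {set T} := [set y | r y m].

Lemma exists_maximal_above x : exists2 m, r x m & maximal_in r m.
Proof.
have [rr ra rt] := po.
case: (arg_minnP (fun z => #|[set w | r z w]|) (rr x)) => m rxm min_m.
exists m => // y rmy; apply/eqP; apply/negPn/negP => nym.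
have up_proper : [set w | r y w] \proper [set w | r m w].
  apply/properP; split.
    by apply/subsetP => w; rewrite !inE; apply: rt.
  exists m; rewrite !inE ?rr //; apply: contra nym => rym.
  by rewrite (ra y m) ?rym ?rmy.
by have := min_m y (rt _ _ _ rxm rmy); rewrite leqNgt (proper_card up_proper).
Qed.

Lemma principal_connected m : connected_ideal r (principal m).
Proof.
have [rr _ rt] := po; split.
- by apply/order_idealP => x y; rewrite !inE => rym rxy; apply: rt rxy rym.
- by apply/set0Pn; exists m; rewrite inE.
- move=> x y; rewrite !inE => xm ym; apply: (connect_trans (y := m)); apply: connect1;
    by rewrite /comparable_in !inE ?xm ?ym rr ?orbT.
Qed.

Lemma principal_inj : injective principal.
Proof.
have [rr ra _] := po; move=> u v /setP uv; apply: ra.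
by have := uv u; have := uv v; rewrite !inE !rr => -> <-.
Qed.

Lemma principal_adjacent u v z : maximal_in r u -> maximal_in r v -> u != v ->
  r z u -> r z v -> gamma_adjacent r (principal u) (principal v).
Proof.
have [rr _ _] := po; move=> max_u max_v nuv zu zv; split; first exact: principal_connected.
apply/and3P; split.
- by apply/set0Pn; exists z; rewrite !inE zu zv.
- apply/subsetPn; exists u; rewrite !inE ?rr //.
  by apply: contra nuv => /max_u ->.
- apply/subsetPn; exists v; rewrite !inE ?rr //.
  by apply: contra nuv => /max_v ->.
Qed.

Hypothesis deg : gamma_deg_le1 r.

(* Both principal ideals of v and w would be neighbours of that of u. *)
Lemma maximal_common_lower_unique u v w x y :
  maximal_in r u -> maximal_in r v -> maximal_in r w -> u != v -> u != w ->
  r x u -> r x v -> r y u -> r y w -> v = w.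
Proof.
move=> max_u max_v max_w nuv nuw xu xv yu yw; apply: principal_inj.
apply: (deg (principal_connected u)).
- exact: principal_adjacent max_u max_v nuv xu xv.
- exact: principal_adjacent max_u max_w nuw yu yw.
Qed.

(* Otherwise the principal ideal of v has the two neighbours those of u and y. *)
Lemma lower_not_below u v x y z :
  maximal_in r u -> maximal_in r v -> u != v -> r x u -> r x v ->
  r y u -> y != u -> ~~ r y v -> r z y -> ~~ r z v.
Proof.
have [rr _ rt] := po.
move=> max_u max_v nuv xu xv yu nyu nyv zy; apply/negP => zv.
have adj_u : gamma_adjacent r (principal v) (principal u).
  by apply: principal_adjacent max_v max_u _ xv xu; rewrite eq_sym.
have adj_y : gamma_adjacent r (principal v) (principal y).
  split; first exact: principal_connected.
  apply/and3P; split.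
  - by apply/set0Pn; exists z; rewrite !inE zv zy.
  - apply/subsetPn; exists v; rewrite !inE ?rr //.
    by apply: contra nuv => vy; rewrite (max_v _ (rt _ _ _ vy yu)).
  - by apply/subsetPn; exists y; rewrite !inE ?rr.
by move: nyu; rewrite (principal_inj (deg (principal_connected v) adj_u adj_y)) eqxx.
Qed.
End Maxima.

Section Decomposition.
Variables (T : finType) (r : rel T).
Hypotheses (po : partial_order r) (deg : gamma_deg_le1 r).
Hypothesis IH : forall (S : {set T}) x y, x \in S -> y \notin S ->
  gamma_deg_le1 (induced r S) -> fwd (induced r S).

Lemma fwd_induced_ideal (S : {set T}) x y :
  order_ideal r S -> x \in S -> y \notin S -> fwd (induced r S).
Proof. by move=> iS xS yS; apply: IH xS yS (gamma_deg_le1_ideal iS deg). Qed.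

Lemma fwd_disconnected (S : {set T}) x y :
  (forall u v, r u v -> (u \in S) = (v \in S)) -> x \in S -> y \notin S -> fwd r.
Proof.
move=> satS xS yS; have yS' : y \in ~: S by rewrite inE.
have iS (A : {set T}) : (forall u v, r u v -> (u \in A) = (v \in A)) -> order_ideal r A.
  by move=> satA; apply/order_idealP=> u v vA /satA ->.
apply: (fwd_of_split (Sub x xS) (Sub y yS') satS).
  exact: fwd_induced_ideal (iS _ satS) xS yS.
apply: (fwd_induced_ideal (x := y) (y := x)); rewrite ?inE ?negbK //.
by apply: iS => u v /satS; rewrite !inE => ->.
Qed.

Lemma fwd_of_pendant_ideal (Q : {set T}) a q :
  order_ideal r Q -> a \notin Q -> q \in Q -> pendant r Q a -> fwd r.
Proof.
have [rr _ _] := po; move=> iQ aQ qQ pQ; have aQ' : a \in ~: Q by rewrite inE.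
apply: (fwd_of_pendant po (a := Sub a aQ') (Sub q qQ) iQ pQ).
  have qQ' : q \notin ~: Q by rewrite inE negbK.
  exact: IH aQ' qQ' (gamma_deg_le1_pendant (a := Sub a aQ') rr iQ pQ deg).
exact: fwd_induced_ideal iQ qQ aQ.
Qed.

Lemma fwd_greatest m q : (forall y, r y m) -> q != m -> fwd r.
Proof.
have [rr ra _] := po; move=> top nqm.
apply: (fwd_of_pendant_ideal (Q := ~: [set m]) (a := m) (q := q)); rewrite ?inE ?eqxx //.
  apply/order_idealP=> u v; rewrite !inE => nvm ruv; apply: contra nvm => /eqP eum.
  by rewrite eum in ruv; rewrite (ra v m) ?ruv ?top.
by move=> u p _; rewrite !inE negbK => /eqP ->; rewrite top rr.
Qed.

Lemma down_set_exit m z : comparably_connected r setT -> ~~ r z m ->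
  exists x y, [/\ r x m, r x y & ~~ r y m].
Proof.
have [rr _ rt] := po; move=> conn nzm.
case: (boolP [exists x, exists y, [&& r x m, r x y & ~~ r y m]]).
  by case/existsP=> x /existsP[y /and3P[]]; exists x, y.
move/existsPn=> no_exit; case/negP: nzm.
apply: (comparably_connected_sub (A := [pred y | r y m]) conn (in_setT m)) (in_setT z).
  exact: rr.
move=> u v _ _ /orP[ruv | rvu]; rewrite !inE => um; first last.
  exact: rt rvu um.
by have /existsPn/(_ v) := no_exit u; rewrite um ruv /= negbK.
Qed.

Lemma fwd_pendant_case m1 m2 x y :
  maximal_in r m1 -> maximal_in r m2 -> m1 != m2 -> r x m1 -> r x m2 ->
  r y m1 -> ~~ r y m2 -> y != m1 -> fwd r.
Proof.
have [rr ra rt] := po; move=> max1 max2 n12 x1 x2 y1 ny2 ny1.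
pose U := [set z | [&& r z m1, ~~ r z m2 & z != m1]].
apply: (fwd_of_pendant_ideal (Q := U) (a := m1) (q := y)); rewrite ?inE ?eqxx ?andbF ?y1 ?ny2 //.
  apply/order_idealP => z w; rewrite !inE => /and3P[w1 nw2 nw1] rzw.
  rewrite (rt _ _ _ rzw w1) (lower_not_below po deg max1 max2 n12 x1 x2 w1 nw1 nw2 rzw) /=.
  by apply: contra nw1 => /eqP ez; rewrite ez in rzw; rewrite (max1 _ rzw).
move=> q p; rewrite !inE => /and3P[q1 nq2 nq1] npU.
apply/idP/idP => [rqp | /max1 ->]; last exact: q1.
have [m3 pm3 max3] := exists_maximal_above po p.
have q3 := rt _ _ _ rqp pm3.
case: (eqVneq m3 m1) => [e31 | n31].
  rewrite e31 in pm3; move: npU; rewrite pm3 /= negb_and !negbK => /orP[p2 | /eqP ->].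
    by rewrite (rt _ _ _ rqp p2) in nq2.
  exact: rr.
case: (eqVneq m3 m2) => [e32 | n32]; first by rewrite e32 in q3; rewrite q3 in nq2.
have := maximal_common_lower_unique po deg max1 max2 max3 n12 _ x1 x2 q1 q3.
by rewrite eq_sym n31 => /(_ isT) e23; rewrite e23 eqxx in n32.
Qed.

(* Another maximal element shares no lower bound with m1 or m2, so the union of
   their principal ideals is a union of components. *)
Lemma below_maximal_pair m1 m2 x z : comparably_connected r setT ->
  maximal_in r m1 -> maximal_in r m2 -> m1 != m2 -> r x m1 -> r x m2 ->
  r z m1 || r z m2.
Proof.
move=> conn max1 max2 n12 x1 x2; have [rr _ rt] := po.
have n21 : m2 != m1 by rewrite eq_sym.
have apart m3 u : maximal_in r m3 -> m3 != m1 -> m3 != m2 -> r u m3 -> ~~ (r u m1 || r u m2).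
  move=> max3 n31 n32 u3; apply/negP => /orP[u1 | u2].
    have := maximal_common_lower_unique po deg max1 max2 max3 n12 _ x1 x2 u1 u3.
    by rewrite eq_sym n31 => /(_ isT) e; rewrite e eqxx in n32.
  have := maximal_common_lower_unique po deg max2 max1 max3 n21 _ x2 x1 u2 u3.
  by rewrite eq_sym n32 => /(_ isT) e; rewrite e eqxx in n31.
apply: (comparably_connected_sub (A := [pred z | r z m1 || r z m2]) conn (in_setT m1))
  (in_setT z); first by rewrite inE rr.
move=> u v _ _ /orP[ruv | rvu]; rewrite !inE => uA; last first.
  by case/orP: uA => [u1 | u2]; rewrite ?(rt _ _ _ rvu u1) ?(rt _ _ _ rvu u2) ?orbT.
have [m4 vm4 max4] := exists_maximal_above po v.
case: (eqVneq m4 m1) => [<- | n41]; first by rewrite vm4.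
case: (eqVneq m4 m2) => [<- | n42]; first by rewrite vm4 orbT.
by move: (apart m4 u max4 n41 n42 (rt _ _ _ ruv vm4)); rewrite uA.
Qed.

Lemma fwd_twin_case m1 m2 x : comparably_connected r setT ->
  maximal_in r m1 -> maximal_in r m2 -> m1 != m2 -> r x m1 -> r x m2 ->
  (forall d, r d m1 -> d != m1 -> r d m2) -> (forall d, r d m2 -> d != m2 -> r d m1) ->
  fwd r.
Proof.
move=> conn max1 max2 n12 x1 x2 sub12 sub21.
have n21 : m2 != m1 by rewrite eq_sym.
set D := ~: [set m1; m2].
have below : {in D, forall d, r d m1 && r d m2}.
  move=> d; rewrite !inE negb_or => /andP[nd1 nd2].
  case/orP: (below_maximal_pair d conn max1 max2 n12 x1 x2) => [d1 | d2].
    by rewrite d1 (sub12 d d1 nd1).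
  by rewrite d2 (sub21 d d2 nd2).
have xD : x \in D.
  rewrite !inE negb_or; apply/andP; split.
    by apply: contra n12 => /eqP e; rewrite e in x2; rewrite (max1 _ x2).
  by apply: contra n21 => /eqP e; rewrite e in x1; rewrite (max2 _ x1).
apply: (fwd_of_twins po (Sub x xD) n12 max1 max2 below).
have m1D : m1 \notin D by rewrite !inE eqxx.
apply: (fwd_induced_ideal _ xD m1D).
apply/order_idealP => u v; rewrite !inE !negb_or => /andP[nv1 nv2] ruv.
by apply/andP; split; [apply: contra nv1 | apply: contra nv2] => /eqP e; rewrite e in ruv;
  [rewrite (max1 _ ruv) | rewrite (max2 _ ruv)].
Qed.

Lemma fwd_connected : comparably_connected r setT -> 1 < #|T| -> fwd r.
Proof.
have [rr _ rt] := po; move=> conn /card_gt1P[t1 [t2 [_ _ nt12]]].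
have [m1 _ max1] := exists_maximal_above po t1.
case: (boolP [forall y, r y m1]) => [/forallP top | /forallPn[z nz]].
  have [q nq] : exists q, q != m1.
    by case: (eqVneq t1 m1) => [e | n]; [exists t2; rewrite -e eq_sym | exists t1].
  exact: fwd_greatest top nq.
have [x [y [x1 rxy ny1]]] := down_set_exit conn nz.
have [m2 ym2 max2] := exists_maximal_above po y.
have n12 : m1 != m2 by apply: contra ny1 => /eqP ->.
have x2 := rt _ _ _ rxy ym2.
case: (boolP [exists u, [&& r u m1, ~~ r u m2 & u != m1]]).
  by case/existsP=> u /and3P[]; apply: fwd_pendant_case max1 max2 n12 x1 x2.
move/existsPn=> no1; case: (boolP [exists u, [&& r u m2, ~~ r u m1 & u != m2]]).
  by case/existsP=> u /and3P[]; apply: fwd_pendant_case max2 max1 _ x2 x1; rewrite eq_sym.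
move/existsPn=> no2; apply: (fwd_twin_case conn max1 max2 n12 x1 x2) => d dm nd.
  by move: (no1 d); rewrite dm nd andbT negbK.
by move: (no2 d); rewrite dm nd andbT negbK.
Qed.
End Decomposition.

Lemma fwd_card1 (T : finType) (r : rel T) : reflexive r -> #|T| = 1 -> fwd r.
Proof.
move=> rr /eqP; rewrite eqn_leq => /andP[/card_le1_eqP all_eq /card_gt0P[x0 _]].
apply: (fwd_iso (f := fun _ : unit => x0) fwd_one).
  by exists (fun _ => tt) => [[] | t] //=; apply: all_eq.
by move=> [] []; rewrite rr.
Qed.

Lemma deg_le1_fwd (T : finType) (r : rel T) :
  partial_order r -> 0 < #|T| -> gamma_deg_le1 r -> fwd r.
Proof.
move: {2}#|T| (leqnn #|T|) => n; elim: n T r => [|n IHn] T r leTn po nT deg.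
  by have := leq_trans nT leTn.
have IH (S : {set T}) x y : x \in S -> y \notin S ->
    gamma_deg_le1 (induced r S) -> fwd (induced r S).
  move=> xS yS degS; apply: IHn (induced_po S po) _ degS; rewrite card_sig.
    rewrite -ltnS (leq_trans _ leTn) // -cardsT; apply: proper_card.
    by apply/properP; split; [apply: subsetT | exists y].
  by apply/card_gt0P; exists x.
have [rr _ _] := po.
case: (leqP #|T| 1) => [le1 | gt1].
  by apply: fwd_card1 rr _; apply/eqP; rewrite eqn_leq le1.
have /card_gt0P[x0 _] := nT.
pose comp := comparable_in r setT.
have comp_sym : connect_sym comp := sym_connect_sym (comparable_in_sym r setT).
case: (boolP [forall y, connect comp x0 y]) => [/forallP conn0 | /forallPn[y ny]].
  apply: (fwd_connected po deg IH) gt1 => u v _ _.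
  by apply: connect_trans (conn0 v); rewrite comp_sym.
apply: (fwd_disconnected deg IH (S := [set z | connect comp x0 z]) (x := x0) (y := y)).
- move=> u v ruv; rewrite !inE.
  have cuv : comp u v by rewrite /comp /comparable_in !inE ruv.
  exact: (same_connect_r comp_sym (connect1 cuv)).
- by rewrite inE connect0.
- by rewrite inE.
Qed.

Theorem proposition2p3 (T : finType) (r : rel T) :
  partial_order r -> 0 < #|T| ->
  (fwd r <-> forall J : {set T}, conn_ideal r J -> #|gamma_nbrs r J| <= 1).
Proof.
move=> po nT; split.
  by case/fwd_po_deg_le1 => po' deg _; apply/(gamma_deg_le1E po').
by move/(gamma_deg_le1E po); apply: deg_le1_fwd po nT.
Qed.
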